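(* Let $d\ge 2$ be an integer, $D\in\{d,-d\}$, and let $a_1,\dots,a_d$ be integers forming a complete system of residues modulo $d$, so that $S=\{a_i \bmod D : 1\le i\le d\}$ is an exact covering system. Then every integer $n$ can be expressed as $n=\sum_{j=0}^k b_jD^j$ with $b_j\in\{a_1,\dots,a_d\}$ for some $k\in\mathbb{N}$ if and only if $G_S$ is (weakly) connected and its unique directed cycle contains $0$. Moreover, in that case the representation is unique up to leading copies of the block of digits of the cycle: if the cycle is $0=c_0\to c_1\to\cdots\to c_L=0$ with $c_t=Dc_{t-1}+e_t$, $e_t\in\{a_1,\dots,a_d\}$, then any two representations $\sum_{j=0}^k b_jD^j$ of the same integer $n$ differ only in that one is obtained from the other by prepending, in the most significant positions, some number of copies of the digit string $e_1e_2\cdots e_L$ (written most significant digit first).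
   Context: For $D=\pm d$, $n\equiv a \bmod D$ means $n\equiv a \bmod d$. The exact covering system digraph $G_S=G(Dn+a_1,\dots,Dn+a_d)$ has vertex set $\mathbb{Z}$ and edges $(n,Dn+a_i)$ for all $n\in\mathbb{Z}$ and $1\le i\le d$ (the $a_i$ are considered as specific representatives). Connectedness refers to the underlying undirected graph; cycles are directed cycles, loops included. Every vertex has indegree one, and when $G_S$ is connected it has exactly one directed cycle. Writing a representation as the digit string $b_kb_{k-1}\cdots b_0$, prepending a block $e_1\cdots e_L$ produces the string $e_1\cdots e_Lb_k\cdots b_0$. *)

From HB Require Import structures.
From mathcomp Require Import all_boot all_order all_algebra.
Set Implicit Arguments. Unset Strict Implicit. Unset Printing Implicit Defensive.
Import Order.TTheory GRing.Theory Num.Theory.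
Local Open Scope ring_scope.

(* Digits a_1..a_d are given as the list [a], with a`_i = a_(i+1). *)

Definition complete_residue_system (d : nat) (a : seq int) : Prop :=
  size a = d /\
  forall n : int, exists! i : 'I_(size a), (n == a`_i %[mod d%:Z])%Z.

Definition rep_value (D : int) (b : seq int) : int :=
  \sum_(j < size b) b`_j * D ^+ j.

(* b is a representation with digits in a: k in N, i.e. b nonempty. *)
Definition is_rep (a : seq int) (b : seq int) : bool :=
  (size b > 0)%N && all (fun x => x \in a) b.

(* Edges of G_S = G(Dn+a_1,...,Dn+a_d): (n, D n + a_i). *)
Definition gedge (D : int) (a : seq int) (n m : int) : bool :=
  (m - D * n) \in a.

Definition weakly_connected (D : int) (a : seq int) : Prop :=
  forall x y : int, exists p : seq int,
    path (fun u v => gedge D a u v || gedge D a v u) x p /\ last x p = y.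

Definition walk_from0 (D : int) (e : seq int) (t : nat) : int :=
  foldl (fun c x => D * c + x) 0 (take t e).

(* e = [e_1;...;e_L] describes a directed cycle 0 = c_0 -> c_1 -> ... -> c_L = 0
   of G_S (loops included): L >= 1, each step is an edge (e_t in a),
   c_L = 0 and c_0, ..., c_(L-1) are pairwise distinct. *)
Definition cycle_through0 (D : int) (a : seq int) (e : seq int) : Prop :=
  [/\ (size e > 0)%N, all (fun x => x \in a) e,
      walk_from0 D e (size e) = 0 &
      uniq [seq walk_from0 D e t | t <- iota 0 (size e)]].

(* Little-endian encoding of "prepending m copies of the block e_1...e_L
   (written most significant digit first)" to b: append m copies of rev e. *)
Definition prepend_blocks (e : seq int) (m : nat) (b : seq int) : seq int :=
  b ++ flatten (nseq m (rev e)).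

From HB Require Import structures.
From mathcomp Require Import all_boot all_order all_algebra.
From mathcomp Require Import zify ring.
Import Order.TTheory GRing.Theory Num.Theory.
Set Implicit Arguments. Unset Strict Implicit. Unset Printing Implicit Defensive.
Local Open Scope ring_scope.

(* Since a is a complete residue system modulo |D|, every vertex n of G_S has
   exactly one in-neighbour par n, the unique u with n - D u in a.  Reading a
   representation of n from its least significant digit walks backwards along
   par, so n has a representation of length k iff iter k par n = 0, and its
   digits are then forced.  If every integer reaches 0 this way, G_S is
   connected through 0 and 0 is periodic under par, i.e. lies on the cycle;
   conversely, when 0 lies on the cycle, reaching 0 is invariant along the
   undirected edges, hence holds everywhere by connectedness.  Two
   representations of n of lengths k <= k' differ by the digits read along
   k' - k steps from 0 back to 0; that is a multiple of the cycle length, so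
   these digits are copies of the cycle block. *)

Section PeriodicPoint.

Variables (T : eqType) (f : T -> T) (x : T) (L : nat).
Hypothesis iterL : iter L f x = x.
Hypothesis no_early_return : forall k, (0 < k < L)%N -> iter k f x != x.

Lemma iter_mul_period q : iter (q * L) f x = x.
Proof. by elim: q => // q IH; rewrite mulSn iterD IH iterL. Qed.

Lemma iter_period_dvd t : (0 < L)%N -> iter t f x = x -> (L %| t)%N.
Proof.
move=> L_gt0; rewrite {1}(divn_eq t L) addnC iterD iter_mul_period /dvdn.
have := ltn_pmod t L_gt0; case: (t %% L)%N => // r ltrL ret.
by have := no_early_return (k := r.+1); rewrite ltrL ret eqxx => /(_ isT).
Qed.

Lemma iter_inj_period i j : (0 < i <= L)%N -> (0 < j <= L)%N ->
  iter i f x = iter j f x -> i = j.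
Proof.
wlog le_ij : i j / (i <= j)%N.
  move=> wlog_ij Hi Hj eq_ij; case: (leqP i j) => [le|/ltnW le]; first exact: wlog_ij.
  exact/esym/wlog_ij.
move=> /andP[i_gt0 _] /andP[_ le_jL] eq_ij; apply/eqP; rewrite eqn_leq le_ij /=.
apply/negP => lt_ji.
have ret : iter (L - j + i) f x = x by rewrite iterD eq_ij -iterD subnK.
by have := no_early_return (k := (L - j + i)%N); rewrite ret eqxx; lia.
Qed.

End PeriodicPoint.

Lemma in_neighbour_fun (T : choiceType) (e : rel T) :
  (forall n, exists u, e u n) -> (forall u u' n, e u n -> e u' n -> u = u') ->
  exists par : T -> T, forall u n, e u n = (u == par n).
Proof.
move=> ex in_uniq; exists (fun n => xchoose (ex n)) => u n.
apply/idP/eqP => [eun|->]; last exact: (xchooseP (ex n)).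
exact: in_uniq _ _ _ eun (xchooseP (ex n)).
Qed.

Lemma uniq_map_iota_inj (T : eqType) (f : nat -> T) n i j :
  uniq [seq f t | t <- iota 0 n] -> (i < n)%N -> (j < n)%N -> f i = f j -> i = j.
Proof.
move=> f_uniq lt_in lt_jn eq_f; apply/eqP.
have size_f : size [seq f t | t <- iota 0 n] = n by rewrite size_map size_iota.
rewrite -(nth_uniq (f 0%N) _ _ f_uniq) ?size_f // !(nth_map 0%N) ?size_iota //.
by rewrite !nth_iota // !add0n eq_f.
Qed.

Lemma rep_value_cons D x b : rep_value D (x :: b) = x + D * rep_value D b.
Proof.
rewrite /rep_value big_ord_recl /= expr0 mulr1 mulr_sumr; congr (_ + _).
by apply: eq_bigr => i _; rewrite exprS mulrCA.
Qed.

Lemma walk_from00 D e : walk_from0 D e 0 = 0.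
Proof. by rewrite /walk_from0 take0. Qed.

Lemma walk_from0S D e t : (t < size e)%N ->
  walk_from0 D e t.+1 = D * walk_from0 D e t + e`_t.
Proof. by move=> lt_te; rewrite /walk_from0 (take_nth 0 lt_te) foldl_rcons. Qed.

Definition ulinked (D : int) (a : seq int) (x y : int) : Prop :=
  exists p, path (fun u v => gedge D a u v || gedge D a v u) x p /\ last x p = y.

Lemma ulinked_trans D a y x z : ulinked D a x y -> ulinked D a y z -> ulinked D a x z.
Proof.
move=> [p [xp <-]] [q [yq <-]]; exists (p ++ q).
by rewrite cat_path last_cat xp yq.
Qed.

Section InNeighbour.

Variables (D : int) (a : seq int) (par : int -> int).
Hypothesis gedgeE : forall u n, gedge D a u n = (u == par n).

Lemma gedge_par n : gedge D a (par n) n.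
Proof. by rewrite gedgeE. Qed.

Lemma par_step n x : x \in a -> par (D * n + x) = n.
Proof. by move=> xa; apply/esym/eqP; rewrite -gedgeE /gedge addrAC subrr add0r. Qed.

Fixpoint digits (k : nat) (n : int) : seq int :=
  if k is k'.+1 then (n - D * par n) :: digits k' (par n) else [::].

Lemma digitsS k n : digits k.+1 n = (n - D * par n) :: digits k (par n).
Proof. by []. Qed.

Lemma size_digits k n : size (digits k n) = k.
Proof. by elim: k n => //= k IH n; rewrite IH. Qed.

Lemma all_digits k n : all (fun x => x \in a) (digits k n).
Proof. by elim: k n => //= k IH n; rewrite IH andbT; apply: gedge_par. Qed.

Lemma nth_digits k n j : (j < k)%N ->
  (digits k n)`_j = iter j par n - D * iter j.+1 par n.
Proof. by elim: k n j => // k IH n [|j] //= lt_jk; rewrite IH // -!iterSr. Qed.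

Lemma digitsD s t n : digits (s + t) n = digits s n ++ digits t (iter s par n).
Proof. by elim: s n => //= s IH n; rewrite IH -iterSr. Qed.

Lemma rep_value_digits k n : rep_value D (digits k n) + D ^+ k * iter k par n = n.
Proof.
elim: k n => [|k IH] n /=; first by rewrite /rep_value big_ord0 add0r mul1r.
by rewrite rep_value_cons -iterS iterSr exprS -mulrA -addrA -mulrDr IH subrK.
Qed.

Lemma digits_rep_value b : all (fun x => x \in a) b ->
  b = digits (size b) (rep_value D b) /\ iter (size b) par (rep_value D b) = 0.
Proof.
elim: b => [|x b IH] /=; first by rewrite /rep_value big_ord0.
case/andP=> xa /IH[eq_b ret].
have par_xb : par (rep_value D (x :: b)) = rep_value D b.
  by rewrite rep_value_cons addrC par_step.
by rewrite /= -iterS iterSr par_xb ret -eq_b rep_value_cons addrK.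
Qed.

Definition reaches0 (n : int) : Prop := exists2 k, (0 < k)%N & iter k par n = 0.

Lemma representableP n :
  (exists b, is_rep a b /\ rep_value D b = n) <-> reaches0 n.
Proof.
split=> [[b [/andP[b_gt0 ab] <-]]|[k k_gt0 ret]].
  by exists (size b) => //; case: (digits_rep_value ab).
exists (digits k n); rewrite /is_rep size_digits k_gt0 all_digits; split=> //.
by have := rep_value_digits k n; rewrite ret mulr0 addr0.
Qed.

Lemma reaches0_par n : reaches0 (par n) -> reaches0 n.
Proof. by case=> k _ ret; exists k.+1; rewrite // iterSr. Qed.

Lemma ulinked_par_invariant (P : int -> Prop) x y :
  (forall n, P (par n) <-> P n) -> ulinked D a x y -> P x -> P y.
Proof.
move=> Ppar [p [path_p <-]]; elim: p x path_p => //= z p IH x.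
by case/andP=> /orP[] xz /IH; move: xz; rewrite gedgeE => /eqP-> Pz_Py /Ppar.
Qed.

Section CycleThrough0.

Variable e : seq int.
Hypothesis e_cycle : cycle_through0 D a e.

Local Notation c := (walk_from0 D e).
Local Notation L := (size e).

Lemma size_cycle_gt0 : (0 < L)%N.
Proof. by case: e_cycle. Qed.

Lemma par_walk t : (t < L)%N -> par (c t.+1) = c t.
Proof.
case: e_cycle => _ ae _ _ lt_tL; rewrite walk_from0S // par_step //.
exact/(allP ae)/mem_nth.
Qed.

Lemma digits_walk t : (t <= L)%N -> digits t (c t) = rev (take t e).
Proof.
elim: t => [|t IH] lt_tL; first by rewrite take0.
rewrite digitsS par_walk // IH ?(ltnW lt_tL) // (take_nth 0 lt_tL) rev_rcons.
by rewrite walk_from0S // addrAC subrr add0r.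
Qed.

Lemma iter_par_walk j : (j <= L)%N -> iter j par 0 = c (L - j).
Proof.
case: e_cycle => _ _ cL0 _; elim: j => [|j IH] lt_jL; first by rewrite subn0.
by rewrite iterS IH ?(ltnW lt_jL) // -(subnSK lt_jL) par_walk // subnSK // leq_subr.
Qed.

Lemma iter_par_cycle : iter L par 0 = 0.
Proof. by rewrite iter_par_walk // subnn walk_from00. Qed.

Lemma cycle_no_early_return k : (0 < k < L)%N -> iter k par 0 != 0.
Proof.
case: e_cycle => _ _ _ c_uniq /andP[k_gt0 lt_kL].
rewrite iter_par_walk ?(ltnW lt_kL) // -[X in _ != X](walk_from00 D e).
by apply/eqP=> /(uniq_map_iota_inj c_uniq); lia.
Qed.

Lemma iter_par0_dvd t : iter t par 0 = 0 -> (L %| t)%N.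
Proof.
exact: iter_period_dvd iter_par_cycle cycle_no_early_return t size_cycle_gt0.
Qed.

Lemma digits_cycle_mul q : digits (q * L) 0 = flatten (nseq q (rev e)).
Proof.
have digits_cycle : digits L 0 = rev e.
  by have := digits_walk (leqnn L); case: e_cycle => _ _ -> _; rewrite take_size.
elim: q => // q IH.
by rewrite mulSn digitsD iter_par_cycle IH digits_cycle.
Qed.

Lemma rep_unique_up_to_cycle (b b' : seq int) : is_rep a b -> is_rep a b' ->
  rep_value D b = rep_value D b' ->
  exists m : nat, b' = prepend_blocks e m b \/ b = prepend_blocks e m b'.
Proof.
wlog le_bb' : b b' / (size b <= size b')%N.
  move=> wlog_bb' rb rb' eq_bb'; case: (leqP (size b) (size b')) => [le|/ltnW le].
    exact: wlog_bb'.
  by have [m [|]] := wlog_bb' b' b le rb' rb (esym eq_bb'); exists m; [right|left].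
move=> /andP[_ ab] /andP[_ ab'] eq_bb'.
have [digits_b ret_b] := digits_rep_value ab.
have [digits_b' ret_b'] := digits_rep_value ab'.
rewrite -eq_bb' -(subnKC le_bb') digitsD -digits_b ret_b in digits_b'.
rewrite -eq_bb' -(subnK le_bb') iterD ret_b in ret_b'.
have [q eq_q] := dvdnP (iter_par0_dvd ret_b').
by exists q; left; rewrite digits_b' eq_q digits_cycle_mul.
Qed.

Lemma reaches0_0 : reaches0 0.
Proof. by exists L; [apply: size_cycle_gt0 | apply: iter_par_cycle]. Qed.

Lemma reaches0_parE n : reaches0 (par n) <-> reaches0 n.
Proof.
split=> [|[[|k] // _ ret]]; first exact: reaches0_par.
by case: k ret => [/= -> | k ret]; [exact: reaches0_0 | exists k.+1; rewrite // -iterSr].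
Qed.

Lemma connected_reaches0 : weakly_connected D a -> forall n, reaches0 n.
Proof.
move=> connected n.
exact: ulinked_par_invariant reaches0_parE (connected 0 n) reaches0_0.
Qed.

End CycleThrough0.

Lemma reaches0_connected : (forall n, reaches0 n) -> weakly_connected D a.
Proof.
move=> reach x y.
have par_linked m : ulinked D a m (par m) /\ ulinked D a (par m) m.
  by split; [exists [:: par m] | exists [:: m]]; rewrite /= gedge_par ?orbT.
have iter_linked k m : ulinked D a m (iter k par m) /\ ulinked D a (iter k par m) m.
  elim: k => [|k [IHl IHr]]; first by split; exists [::].
  have [to_par from_par] := par_linked (iter k par m).
  by rewrite iterS; split; [apply: ulinked_trans to_par | apply: ulinked_trans IHr].
have [j _ ret_x] := reach x; have [k _ ret_y] := reach y.
apply: ulinked_trans (iter_linked j x).1 _; rewrite ret_x -ret_y.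
exact: (iter_linked k y).2.
Qed.

Lemma walk_rev_digits k n t : iter k par n = 0 -> (t <= k)%N ->
  walk_from0 D (rev (digits k n)) t = iter (k - t) par n.
Proof.
move=> ret; elim: t => [|t IH] lt_tk; first by rewrite walk_from00 subn0.
rewrite walk_from0S ?size_rev ?size_digits // IH ?(ltnW lt_tk) //.
rewrite nth_rev ?size_digits // nth_digits; last by lia.
by rewrite subnSK // addrC subrK.
Qed.

Lemma first_return_cycle L : (0 < L)%N -> iter L par 0 = 0 ->
  (forall j, (0 < j < L)%N -> iter j par 0 != 0) ->
  cycle_through0 D a (rev (digits L 0)).
Proof.
move=> L_gt0 retL no_early_return.
split; rewrite ?size_rev ?size_digits ?all_rev ?all_digits //.
  by rewrite walk_rev_digits ?subnn.
rewrite (_ : [seq _ | t <- _] = [seq iter (L - t) par 0 | t <- iota 0 L]); last first.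
  by apply/eq_in_map=> t; rewrite mem_iota => /andP[_ /ltnW]; apply: walk_rev_digits.
rewrite map_inj_in_uniq ?iota_uniq // => t t'.
rewrite !mem_iota !add0n => /andP[_ lt_tL] /andP[_ lt_t'L].
by move/(iter_inj_period retL no_early_return); lia.
Qed.

Lemma reaches0_cycle : reaches0 0 -> exists e, cycle_through0 D a e.
Proof.
case=> k k_gt0 ret; have : exists L, (0 < L)%N && (iter L par 0 == 0).
  by exists k; rewrite k_gt0 ret eqxx.
case/ex_minnP=> L /andP[L_gt0 /eqP retL] L_min.
exists (rev (digits L 0)); apply: first_return_cycle L_gt0 retL _ => j /andP[j_gt0 lt_jL].
by apply/eqP=> retj; have := L_min j; rewrite j_gt0 retj eqxx leqNgt lt_jL => /(_ isT).
Qed.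

End InNeighbour.

Section CompleteResidueSystem.

Variables (d : nat) (D : int) (a : seq int).
Hypotheses (d_gt0 : (0 < d)%N) (D_pm_d : D = d%:Z \/ D = - d%:Z).
Hypothesis a_crs : complete_residue_system d a.

Lemma crs_eq_mod x y : x \in a -> y \in a -> (x == y %[mod d%:Z])%Z -> x = y.
Proof.
case: a_crs => _ crs xa ya xy; have [i [_ i_uniq]] := crs x.
have idx z : z \in a -> (index z a < size a)%N by rewrite index_mem.
have := i_uniq (Ordinal (idx x xa)); have := i_uniq (Ordinal (idx y ya)).
rewrite /= !nth_index // xy eqxx => /(_ isT) iy /(_ isT) ix.
by have /(congr1 (nth 0 a \o val)) := etrans (esym ix) iy; rewrite /= !nth_index.
Qed.

Lemma crs_exists_mod n : exists2 x, x \in a & (n == x %[mod d%:Z])%Z.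
Proof. by case: a_crs => _ /(_ n)[i [ni _]]; exists a`_i; rewrite ?mem_nth. Qed.

Lemma dvdz_D m : (D %| m)%Z = (d%:Z %| m)%Z.
Proof. by case: D_pm_d => ->; rewrite // !dvdzE abszN. Qed.

Lemma gedge_crs_exists n : exists u, gedge D a u n.
Proof.
have [x xa nx] := crs_exists_mod n; exists ((n - x) %/ D)%Z.
by rewrite /gedge mulrC divzK ?dvdz_D -?eqz_mod_dvd // opprB addrC subrK.
Qed.

Lemma gedge_crs_unique u u' n : gedge D a u n -> gedge D a u' n -> u = u'.
Proof.
rewrite /gedge => xa x'a.
have D_neq0 : D != 0 by case: D_pm_d => ->; rewrite ?oppr_eq0 eqz_nat -lt0n.
have : n - D * u = n - D * u'.
  apply: crs_eq_mod xa x'a _; rewrite eqz_mod_dvd -dvdz_D.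
  by rewrite (_ : _ - _ = D * (u' - u)) ?dvdz_mulr //; ring.
by move/addrI/oppr_inj/(mulfI D_neq0).
Qed.

End CompleteResidueSystem.

Theorem mainTheorem9 (d : nat) (D : int) (a : seq int) :
  (2 <= d)%N ->
  (D = d%:Z \/ D = - d%:Z) ->
  complete_residue_system d a ->
  ((forall n : int, exists b : seq int, is_rep a b /\ rep_value D b = n)
     <->
   (weakly_connected D a /\ exists e : seq int, cycle_through0 D a e))
  /\
  ((weakly_connected D a /\ exists e : seq int, cycle_through0 D a e) ->
   forall e : seq int, cycle_through0 D a e ->
   forall b b' : seq int, is_rep a b -> is_rep a b' ->
     rep_value D b = rep_value D b' ->
     exists m : nat, b' = prepend_blocks e m b \/ b = prepend_blocks e m b').
Proof.
move=> d_ge2 D_pm_d a_crs; have d_gt0 : (0 < d)%N by apply: ltnW.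
have [par gedgeE] := in_neighbour_fun (gedge_crs_exists D_pm_d a_crs)
  (gedge_crs_unique d_gt0 D_pm_d a_crs).
split; first split.
- move=> representable; have reach n := (representableP gedgeE n).1 (representable n).
  split; first exact: reaches0_connected gedgeE reach.
  exact: reaches0_cycle gedgeE (reach 0).
- case=> connected [e e_cycle] n; apply/(representableP gedgeE).
  exact: connected_reaches0 e_cycle connected n.
- move=> _ e e_cycle b b' rep_b rep_b' eq_bb'.
  exact: (rep_unique_up_to_cycle gedgeE e_cycle rep_b rep_b' eq_bb').
Qed.
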